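(* Let $0<\beta<1$. There exist a strictly positive function $\eta:\mathbb{N}_0\to(0,\infty)$ and a nonnegative strictly increasing function $t^*:[0,\infty)\to[0,\infty)$ with $t^*(v)=0$ iff $v=0$, both depending only on $\beta$, such that: if $u$ is a solution of $\partial_tu=\Delta(u^\beta)$ on $[0,\infty)\times\mathbb{Z}$ with initial data $0\le u_0\le1$, then $$u(t,k)\ge\eta(|k-l|)\,(t-s)^{\frac1{1-\beta}}$$ for all $k,l\in\mathbb{Z}$ and all $s\ge0$, $t$ with $0\le t-s\le t^*(u(s,l))$.
   Context: $\Delta v(k)=v(k-1)-2v(k)+v(k+1)$. A solution: $u\in C^0([0,\infty);\ell^\infty_+(\mathbb{Z}))$ with $u(0)=u_0$, each $u(\cdot,k)\in C^1((0,\infty))$ satisfying $\frac{d}{dt}u(t,k)=\Delta(u^\beta)(t,k)$ for all $t>0$. *)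

From Stdlib Require Import Reals ZArith.
From Coquelicot Require Import Coquelicot.
Open Scope R_scope.

(* x^b for x >= 0 (with 0^b = 0, for b > 0); Stdlib's Rpower is only meaningful on x > 0 *)
Definition rpow (b x : R) : R := if Rlt_dec 0 x then Rpower x b else 0.

Definition dlap (v : Z -> R) (k : Z) : R :=
  v (k - 1)%Z - 2 * v k + v (k + 1)%Z.

Definition linf_plus (v : Z -> R) : Prop :=
  (forall k, 0 <= v k) /\ exists M, forall k, Rabs (v k) <= M.

Definition is_solution (beta : R) (u0 : Z -> R) (u : R -> Z -> R) : Prop :=
  (forall t, 0 <= t -> linf_plus (u t)) /\
  (forall t0, 0 <= t0 -> forall eps, 0 < eps -> exists delta, 0 < delta /\
     forall t, 0 <= t -> Rabs (t - t0) < delta ->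
       forall k, Rabs (u t k - u t0 k) <= eps) /\
  (forall k, u 0 k = u0 k) /\
  (forall k t, 0 < t ->
     is_derive (fun tau => u tau k) t (dlap (fun j => rpow beta (u t j)) k)) /\
  (forall k t, 0 < t ->
     continuous (fun tau => dlap (fun j => rpow beta (u tau j)) k) t).

(* Comparison with explicit barriers, with p = 1/(1-beta).  At the site l the
   Laplacian of u^beta loses at most 2 u^beta, so while u(.,l) stays below
   V = u(s,l) it decays at rate at most 3 V^beta; hence u(t,l) >= V/2 for
   t - s <= V^(1-beta)/6, a window on which (t-s)^p <= V.  At distance n+1
   from l, the neighbour at distance n feeds in at least eta_n^beta (t-s)^(p-1),
   which beats the loss 2 eta_(n+1)^beta (t-s)^(p-1) plus the growth
   p eta_(n+1) (t-s)^(p-1) of the barrier eta_(n+1) (t-s)^p; the comparison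
   principle then gives the bound by induction on n. *)

From Stdlib Require Import Reals ZArith Lra Lia.
From Coquelicot Require Import Coquelicot.
Open Scope R_scope.

Definition right_continuous (f : R -> R) (x : R) : Prop :=
  forall eps, 0 < eps -> exists d, 0 < d /\
    forall y, x <= y < x + d -> Rabs (f y - f x) < eps.

Lemma continuity_pt_ball f x : continuity_pt f x -> forall eps, 0 < eps ->
  exists d, 0 < d /\ forall y, Rabs (y - x) < d -> Rabs (f y - f x) < eps.
Proof.
  intros Hf eps Heps. destruct (Hf eps Heps) as [d [Hd Hball]].
  exists d; split; [exact Hd|]. intros y Hy.
  destruct (Req_dec y x) as [->|Hne].
  - rewrite !Rminus_eq_0, Rabs_R0; exact Heps.
  - apply Hball. repeat split; auto.
Qed.

Lemma continuity_pt_right_continuous f x : continuity_pt f x -> right_continuous f x.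
Proof.
  intros Hf eps Heps. destruct (continuity_pt_ball f x Hf eps Heps) as [d [Hd Hball]].
  exists d; split; [exact Hd|]. intros y Hy. apply Hball, Rabs_def1; lra.
Qed.

Lemma right_continuous_minus f g x :
  right_continuous f x -> right_continuous g x -> right_continuous (fun y => f y - g y) x.
Proof.
  intros Hf Hg eps Heps.
  destruct (Hf (eps / 2) ltac:(lra)) as [df [Hdf Hf']].
  destruct (Hg (eps / 2) ltac:(lra)) as [dg [Hdg Hg']].
  exists (Rmin df dg); split; [now apply Rmin_pos|]. intros y Hy.
  assert (Rmin df dg <= df) by apply Rmin_l. assert (Rmin df dg <= dg) by apply Rmin_r.
  specialize (Hf' y ltac:(lra)). specialize (Hg' y ltac:(lra)).
  apply Rabs_def2 in Hf'. apply Rabs_def2 in Hg'. apply Rabs_def1; lra.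
Qed.

Lemma is_derive_continuity_pt f x l : is_derive f x l -> continuity_pt f x.
Proof.
  intros Hf. apply continuity_pt_filterlim.
  apply (@ex_derive_continuous R_AbsRing R_NormedModule). now exists l.
Qed.

Lemma last_nonneg_point (h : R -> R) (s T : R) :
  s <= T -> right_continuous h s -> (forall t, s < t <= T -> continuity_pt h t) ->
  0 <= h s -> h T < 0 ->
  exists t0, s <= t0 < T /\ 0 <= h t0 /\ right_continuous h t0 /\
    forall t, t0 < t <= T -> h t < 0.
Proof.
  intros HsT Hrc Hc Hs HT.
  set (E := fun t => s <= t <= T /\ 0 <= h t).
  destruct (completeness E) as [t0 [Hub Hlub]].
  { exists T. intros x [Hx _]. lra. }
  { exists s. split; [lra|exact Hs]. }
  assert (Hst0 : s <= t0) by (apply Hub; split; [lra|exact Hs]).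
  assert (Ht0T : t0 <= T) by (apply Hlub; intros x [Hx _]; lra).
  assert (Hafter : forall t, t0 < t <= T -> h t < 0).
  { intros t Ht. destruct (Rlt_le_dec (h t) 0) as [|Hnn]; [assumption|].
    assert (t <= t0) by (apply Hub; split; [lra|exact Hnn]). lra. }
  assert (Hat : 0 <= h t0).
  { destruct (Req_dec t0 s) as [->|Hne]; [exact Hs|].
    destruct (Rle_lt_dec 0 (h t0)) as [|Hneg]; [assumption|exfalso].
    destruct (continuity_pt_ball _ _ (Hc t0 ltac:(lra)) (- h t0) ltac:(lra))
      as [d [Hd Hball]].
    assert (t0 <= t0 - d / 2); [|lra].
    apply Hlub. intros x [Hx Hhx].
    destruct (Rle_lt_dec x (t0 - d / 2)) as [|Hx']; [assumption|].
    assert (x <= t0) by (apply Hub; split; assumption).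
    specialize (Hball x (Rabs_def1 (x - t0) d ltac:(lra) ltac:(lra))).
    apply Rabs_def2 in Hball. lra. }
  exists t0. repeat split; auto.
  - destruct (Req_dec t0 T) as [->|]; lra.
  - destruct (Req_dec t0 s) as [->|Hne]; [exact Hrc|].
    apply continuity_pt_right_continuous, Hc. lra.
Qed.

Lemma nonneg_of_deriv_pos_where_neg (h dh : R -> R) (s T : R) :
  s <= T -> right_continuous h s ->
  (forall t, s < t <= T -> is_derive h t (dh t)) ->
  (forall t, s < t <= T -> h t < 0 -> 0 < dh t) ->
  0 <= h s -> 0 <= h T.
Proof.
  intros HsT Hrc Hd Hpos Hs.
  destruct (Rle_lt_dec 0 (h T)) as [|HT]; [assumption|exfalso].
  destruct (last_nonneg_point h s T HsT Hrc) as [t0 [Ht0 [Hh0 [Hrc0 Hneg]]]]; auto.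
  { intros t Ht. exact (is_derive_continuity_pt _ _ _ (Hd t Ht)). }
  destruct (Hrc0 (h t0 - h T) ltac:(lra)) as [d [Hd0 Hclose]].
  set (a := t0 + Rmin d (T - t0) / 2).
  assert (Ha : t0 < a < T /\ a < t0 + d).
  { assert (Rmin d (T - t0) <= d) by apply Rmin_l.
    assert (Rmin d (T - t0) <= T - t0) by apply Rmin_r.
    assert (0 < Rmin d (T - t0)) by (apply Rmin_pos; lra).
    unfold a; lra. }
  clearbody a.
  specialize (Hclose a ltac:(lra)). apply Rabs_def2 in Hclose.
  (* h < 0 on [a, T], so h is increasing there *)
  assert (h a < h T); [|lra].
  apply (incr_function_le h a T dh); simpl; try lra.
  - intros x Hx1 Hx2. apply Hd. lra.
  - intros x Hx1 Hx2. apply Hpos, Hneg; lra.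
Qed.

Lemma comparison_principle (v w dv dw : R -> R) (s T : R) :
  s <= T -> right_continuous v s -> right_continuous w s ->
  (forall t, s < t <= T -> is_derive v t (dv t)) ->
  (forall t, s < t <= T -> is_derive w t (dw t)) ->
  (forall t, s < t <= T -> v t < w t -> dw t < dv t) ->
  w s <= v s -> w T <= v T.
Proof.
  intros HsT Hv Hw Hdv Hdw Hpos Hs.
  enough (0 <= v T - w T) by lra.
  apply (nonneg_of_deriv_pos_where_neg (fun t => v t - w t) (fun t => dv t - dw t) s T);
    auto; try lra.
  - now apply right_continuous_minus.
  - intros t Ht. apply (is_derive_minus v w); auto.
  - intros t Ht Hneg. specialize (Hpos t Ht ltac:(lra)). lra.
Qed.

Lemma Rpower_gt0 x y : 0 < Rpower x y.
Proof. apply exp_pos. Qed.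

Lemma Rpower_1_l x : Rpower 1 x = 1.
Proof. unfold Rpower; rewrite ln_1, Rmult_0_r; apply exp_0. Qed.

Lemma Rpower_le_exp_le1 x a b : 0 < x <= 1 -> a <= b -> Rpower x b <= Rpower x a.
Proof.
  intros Hx Hab. unfold Rpower.
  assert (ln x <= 0) by (rewrite <- ln_1; apply ln_le; lra).
  assert (Hle : b * ln x <= a * ln x) by nra.
  destruct Hle as [Hlt| ->]; [left; now apply exp_increasing|lra].
Qed.

Lemma rpow_Rpower b x : 0 < x -> rpow b x = Rpower x b.
Proof. intros Hx; unfold rpow; destruct (Rlt_dec 0 x); [reflexivity|lra]. Qed.

Lemma rpow_0 b : rpow b 0 = 0.
Proof. unfold rpow; destruct (Rlt_dec 0 0); [lra|reflexivity]. Qed.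

Lemma rpow_ge0 b x : 0 <= rpow b x.
Proof. unfold rpow; destruct (Rlt_dec 0 x); [left; apply Rpower_gt0|lra]. Qed.

Lemma rpow_gt0 b x : 0 < x -> 0 < rpow b x.
Proof. intros Hx; rewrite rpow_Rpower by exact Hx; apply Rpower_gt0. Qed.

Lemma rpow_1 x : 0 <= x -> rpow 1 x = x.
Proof.
  intros [Hx| <-]; [|apply rpow_0]. rewrite rpow_Rpower by exact Hx. now apply Rpower_1.
Qed.

Lemma rpow_le_compat c a b : 0 <= c -> 0 <= a <= b -> rpow c a <= rpow c b.
Proof.
  intros Hc [[Ha| <-] Hab]; [|rewrite rpow_0; apply rpow_ge0].
  rewrite !rpow_Rpower by lra. apply Rle_Rpower_l; lra.
Qed.

Lemma rpow_lt_compat c a b : 0 < c -> 0 <= a < b -> rpow c a < rpow c b.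
Proof.
  intros Hc [[Ha| <-] Hab]; [|rewrite rpow_0; now apply rpow_gt0].
  rewrite !rpow_Rpower by lra. apply Rlt_Rpower_l; lra.
Qed.

Lemma rpow_eq0 c x : 0 <= x -> rpow c x = 0 -> x = 0.
Proof. intros [Hx| <-] H0; [|reflexivity]. pose proof (rpow_gt0 c x Hx). lra. Qed.

Lemma rpow_plus a b x : 0 <= x -> rpow a x * rpow b x = rpow (a + b) x.
Proof.
  intros [Hx| <-]; [|rewrite !rpow_0; ring].
  rewrite !rpow_Rpower by exact Hx. now rewrite Rpower_plus.
Qed.

Lemma rpow_inv_rpow a x : 0 < a -> 0 <= x -> rpow (1 / a) (rpow a x) = x.
Proof.
  intros Ha [Hx| <-]; [|now rewrite !rpow_0].
  rewrite (rpow_Rpower a x), rpow_Rpower by (try apply Rpower_gt0; exact Hx).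
  rewrite Rpower_mult. replace (a * (1 / a)) with 1 by (field; lra). now apply Rpower_1.
Qed.

Lemma rpow_mult_rpow b p c t : 0 < c -> 0 < t ->
  rpow b (c * rpow p t) = Rpower c b * Rpower t (p * b).
Proof.
  intros Hc Ht. rewrite (rpow_Rpower p t) by exact Ht.
  rewrite rpow_Rpower by (apply Rmult_lt_0_compat; [exact Hc|apply Rpower_gt0]).
  rewrite <- Rpower_mult_distr, Rpower_mult by (try apply Rpower_gt0; exact Hc).
  reflexivity.
Qed.

Lemma is_derive_rpow_shift p s t : s < t ->
  is_derive (fun x => rpow p (x - s)) t (p * Rpower (t - s) (p - 1)).
Proof.
  intros Hst.
  apply (is_derive_ext_loc (fun x => Rpower (x - s) p)).
  { apply (locally_interval _ t s p_infty); simpl; auto.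
    intros y Hy _. symmetry; apply rpow_Rpower; lra. }
  apply is_derive_Reals.
  replace (p * Rpower (t - s) (p - 1)) with (p * Rpower (t - s) (p - 1) * 1) by ring.
  apply (derivable_pt_lim_comp (fun x => x - s) (fun y => Rpower y p)).
  - apply is_derive_Reals. auto_derive; auto; ring.
  - apply derivable_pt_lim_power. lra.
Qed.

Lemma right_continuous_scal_rpow_shift c p s : 0 < p ->
  right_continuous (fun x => c * rpow p (x - s)) s.
Proof.
  intros Hp eps Heps.
  set (a := eps / (Rabs c + 1)).
  assert (Ha : 0 < a) by (apply Rdiv_lt_0_compat; [exact Heps|pose proof (Rabs_pos c); lra]).
  assert (Hca : Rabs c * a < eps).
  { unfold a. apply (Rmult_lt_reg_r (Rabs c + 1)); [pose proof (Rabs_pos c); lra|].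
    field_simplify; [nra|pose proof (Rabs_pos c); lra]. }
  exists (Rpower a (1 / p)); split; [apply Rpower_gt0|].
  intros y Hy.
  assert (Hlt : rpow p (y - s) < a).
  { replace a with (rpow p (Rpower a (1 / p))).
    - apply rpow_lt_compat; lra.
    - rewrite rpow_Rpower, Rpower_mult by apply Rpower_gt0.
      replace (1 / p * p) with 1 by (field; lra). now apply Rpower_1. }
  rewrite Rminus_eq_0, rpow_0, Rmult_0_r, Rminus_0_r, Rabs_mult, (Rabs_pos_eq (rpow _ _))
    by apply rpow_ge0.
  pose proof (Rabs_pos c). pose proof (rpow_ge0 p (y - s)). nra.
Qed.

Lemma dlap_ge_neighbor (f : Z -> R) k k' : (forall j, 0 <= f j) ->
  k' = (k - 1)%Z \/ k' = (k + 1)%Z -> f k' - 2 * f k <= dlap f k.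
Proof.
  intros Hf [-> | ->]; unfold dlap;
    [specialize (Hf (k + 1)%Z) | specialize (Hf (k - 1)%Z)]; lra.
Qed.

Lemma neighbor_closer k l m : Z.abs_nat (k - l) = S m ->
  exists k', Z.abs_nat (k' - l) = m /\ (k' = (k - 1)%Z \/ k' = (k + 1)%Z).
Proof.
  intros H. destruct (Z_lt_le_dec l k); [exists (k - 1)%Z | exists (k + 1)%Z]; lia.
Qed.

(* [eta_(n+1)^b = eta_n^b / (3 + p)] leaves room both for the loss [2 eta_(n+1)^b]
   at the site and for the growth rate [p eta_(n+1)] of the barrier. *)
Fixpoint eta_seq (b p : R) (n : nat) : R :=
  match n with
  | O => 1 / 2
  | S m => Rpower (Rpower (eta_seq b p m) b / (3 + p)) (1 / b)
  end.

Lemma eta_seq_pos b p n : 0 < eta_seq b p n.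
Proof. destruct n; simpl; [lra|apply Rpower_gt0]. Qed.

Lemma eta_seq_S_Rpower b p n : 0 < b -> 0 < p ->
  Rpower (eta_seq b p (S n)) b = Rpower (eta_seq b p n) b / (3 + p).
Proof.
  intros Hb Hp. simpl. rewrite Rpower_mult. replace (1 / b * b) with 1 by (field; lra).
  apply Rpower_1, Rdiv_lt_0_compat; [apply Rpower_gt0|lra].
Qed.

Lemma eta_seq_le1 b p n : 0 < b -> 0 < p -> eta_seq b p n <= 1.
Proof.
  intros Hb Hp. induction n as [|n IH]; [simpl; lra|].
  pose proof (eta_seq_pos b p n) as Hpos.
  assert (Hb1 : Rpower (eta_seq b p n) b <= 1).
  { apply Rle_trans with (Rpower 1 b); [apply Rle_Rpower_l; lra|now rewrite Rpower_1_l]. }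
  simpl. apply Rle_trans with (Rpower 1 (1 / b)); [|now rewrite Rpower_1_l].
  apply Rle_Rpower_l.
  - left; apply Rdiv_lt_0_compat; lra.
  - split; [apply Rdiv_lt_0_compat; [apply Rpower_gt0|lra]|].
    apply Rcomplements.Rle_div_l; lra.
Qed.

Lemma eta_seq_step b p n : 0 < b < 1 -> 0 < p ->
  2 * Rpower (eta_seq b p (S n)) b + p * eta_seq b p (S n) < Rpower (eta_seq b p n) b.
Proof.
  intros Hb Hp.
  assert (Hle : eta_seq b p (S n) <= Rpower (eta_seq b p (S n)) b).
  { rewrite <- (Rpower_1 (eta_seq b p (S n))) at 1 by apply eta_seq_pos.
    apply Rpower_le_exp_le1; [split; [apply eta_seq_pos|apply eta_seq_le1]|]; lra. }
  rewrite eta_seq_S_Rpower in * by lra.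
  pose proof (Rpower_gt0 (eta_seq b p n) b).
  set (A := Rpower (eta_seq b p n) b) in *.
  assert (A / (3 + p) * (2 + p) < A); [|nra].
  apply (Rmult_lt_reg_r (3 + p)); [lra|]. field_simplify; nra.
Qed.

Section Solution.

Variables (beta : R) (u0 : Z -> R) (u : R -> Z -> R).
Hypotheses (hb0 : 0 < beta) (hb1 : beta < 1) (Hsol : is_solution beta u0 u).

Local Notation p := (1 / (1 - beta)).

Lemma exponent_gt0 : 0 < p.
Proof. apply Rdiv_lt_0_compat; lra. Qed.

Lemma exponent_mul_beta : p * beta = p - 1.
Proof. field; lra. Qed.

Lemma solution_nonneg t k : 0 <= t -> 0 <= u t k.
Proof. intros Ht. destruct Hsol as [Hlin _]. exact (proj1 (Hlin t Ht) k). Qed.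

Lemma solution_is_derive k t : 0 < t ->
  is_derive (fun tau => u tau k) t (dlap (fun j => rpow beta (u t j)) k).
Proof. destruct Hsol as [_ [_ [_ [Hder _]]]]. apply Hder. Qed.

Lemma solution_right_continuous s k : 0 <= s -> right_continuous (fun t => u t k) s.
Proof.
  intros Hs eps Heps. destruct Hsol as [_ [Hcont _]].
  destruct (Hcont s Hs (eps / 2) ltac:(lra)) as [d [Hd Hclose]].
  exists d; split; [exact Hd|]. intros t Ht.
  specialize (Hclose t ltac:(lra) (Rabs_def1 (t - s) d ltac:(lra) ltac:(lra)) k). lra.
Qed.

Lemma solution_linear_lower_bound s l t : 0 <= s -> s <= t ->
  u s l - 3 * rpow beta (u s l) * (t - s) <= u t l.
Proof.
  intros Hs Hst. set (V := u s l).
  assert (Hw : forall x, is_derive (fun x => V - 3 * rpow beta V * (x - s)) x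
                                   (- (3 * rpow beta V))).
  { intros x. auto_derive; auto; ring. }
  apply (comparison_principle (fun x => u x l) (fun x => V - 3 * rpow beta V * (x - s))
           (fun x => dlap (fun j => rpow beta (u x j)) l) (fun _ => - (3 * rpow beta V)) s t);
    auto.
  - now apply solution_right_continuous.
  - apply continuity_pt_right_continuous, (is_derive_continuity_pt _ _ _ (Hw s)).
  - intros x Hx. apply solution_is_derive. lra.
  - intros x Hx Hbelow.
    assert (Hux : 0 <= u x l) by (apply solution_nonneg; lra).
    assert (HV : 0 < V).
    { pose proof (rpow_ge0 beta V). nra. }
    assert (Hpow : rpow beta (u x l) <= rpow beta V).
    { apply rpow_le_compat; [lra|]. pose proof (rpow_ge0 beta V). nra. }
    pose proof (dlap_ge_neighbor (fun j => rpow beta (u x j)) l (l - 1)%Z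
                  (fun j => rpow_ge0 _ _) (or_introl eq_refl)).
    pose proof (rpow_ge0 beta (u x (l - 1)%Z)). pose proof (rpow_gt0 beta V HV).
    simpl in *. lra.
  - unfold V. lra.
Qed.

Lemma solution_lower_bound_origin s l t : 0 <= s ->
  s <= t <= s + rpow (1 - beta) (u s l) / 6 -> rpow p (t - s) / 2 <= u t l.
Proof.
  intros Hs Ht.
  pose proof (solution_linear_lower_bound s l t Hs (proj1 Ht)) as Hlinear.
  set (V := u s l) in *.
  assert (HV : 0 <= V) by now apply solution_nonneg.
  pose proof (rpow_ge0 (1 - beta) V).
  assert (Hdecay : 3 * rpow beta V * (t - s) <= V / 2).
  { assert (HVV : rpow beta V * rpow (1 - beta) V = V).
    { rewrite rpow_plus by exact HV. replace (beta + (1 - beta)) with 1 by ring.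
      now apply rpow_1. }
    assert (rpow beta V * (t - s) <= rpow beta V * (rpow (1 - beta) V / 6)).
    { apply Rmult_le_compat_l; [apply rpow_ge0|]. lra. }
    lra. }
  assert (Hgrowth : rpow p (t - s) <= V).
  { rewrite <- (rpow_inv_rpow (1 - beta) V) by lra.
    apply rpow_le_compat; [pose proof exponent_gt0; lra|lra]. }
  lra.
Qed.

Lemma solution_lower_bound_spread s T k k' e e' : 0 <= s -> 0 < e -> 0 < e' ->
  2 * Rpower e' beta + p * e' < Rpower e beta ->
  k' = (k - 1)%Z \/ k' = (k + 1)%Z ->
  (forall x, s < x <= T -> e * rpow p (x - s) <= u x k') ->
  forall t, s <= t <= T -> e' * rpow p (t - s) <= u t k.
Proof.
  intros Hs He He' Hee' Hnb Hk' t Ht.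
  apply (comparison_principle (fun x => u x k) (fun x => e' * rpow p (x - s))
           (fun x => dlap (fun j => rpow beta (u x j)) k)
           (fun x => e' * (p * Rpower (x - s) (p - 1))) s t); try lra.
  - now apply solution_right_continuous.
  - apply right_continuous_scal_rpow_shift, exponent_gt0.
  - intros x Hx. apply solution_is_derive. lra.
  - intros x Hx. apply is_derive_scal, is_derive_rpow_shift. lra.
  - intros x Hx Hbelow.
    assert (Hxs : 0 < x - s) by lra.
    set (X := Rpower (x - s) (p - 1)).
    assert (HX : 0 < X) by apply Rpower_gt0.
    assert (Hself : rpow beta (u x k) <= Rpower e' beta * X).
    { unfold X. rewrite <- exponent_mul_beta, <- rpow_mult_rpow by assumption.
      apply rpow_le_compat; [lra|]. split; [apply solution_nonneg|]; lra. }
    assert (Hnbr : Rpower e beta * X <= rpow beta (u x k')).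
    { unfold X. rewrite <- exponent_mul_beta, <- rpow_mult_rpow by assumption.
      apply rpow_le_compat; [lra|]. split; [|apply Hk'; lra].
      pose proof (rpow_gt0 p (x - s) Hxs). nra. }
    pose proof (dlap_ge_neighbor (fun j => rpow beta (u x j)) k k' (fun j => rpow_ge0 _ _) Hnb).
    simpl in *. nra.
  - rewrite Rminus_eq_0, rpow_0, Rmult_0_r. now apply solution_nonneg.
Qed.

Lemma solution_lower_bound s l n k t : 0 <= s -> Z.abs_nat (k - l) = n ->
  s <= t <= s + rpow (1 - beta) (u s l) / 6 ->
  eta_seq beta p n * rpow p (t - s) <= u t k.
Proof.
  intros Hs. revert k t. induction n as [|m IH]; intros k t Hk Ht.
  - replace k with l by lia. simpl.
    pose proof (solution_lower_bound_origin s l t Hs Ht). lra.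
  - destruct (neighbor_closer k l m Hk) as [k' [Hk' Hnb]].
    apply (solution_lower_bound_spread s (s + rpow (1 - beta) (u s l) / 6) k k'
             (eta_seq beta p m)); auto using eta_seq_pos.
    + apply eta_seq_step; [lra|apply exponent_gt0].
    + intros x Hx. apply IH; [exact Hk'|lra].
Qed.

End Solution.

Theorem lemmaA13 (beta : R) (hb0 : 0 < beta) (hb1 : beta < 1) :
  exists (eta : nat -> R) (tstar : R -> R),
    (forall n, 0 < eta n) /\
    (forall v, 0 <= v -> 0 <= tstar v) /\
    (forall v w, 0 <= v -> v < w -> tstar v < tstar w) /\
    (forall v, 0 <= v -> (tstar v = 0 <-> v = 0)) /\
    forall (u0 : Z -> R) (u : R -> Z -> R),
      (forall k, 0 <= u0 k <= 1) ->
      is_solution beta u0 u ->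
      forall (k l : Z) (s t : R), 0 <= s -> 0 <= t - s -> t - s <= tstar (u s l) ->
        eta (Z.abs_nat (k - l)) * rpow (1 / (1 - beta)) (t - s) <= u t k.
Proof.
  exists (eta_seq beta (1 / (1 - beta))), (fun v => rpow (1 - beta) v / 6).
  split; [intros n; apply eta_seq_pos|].
  split; [intros v _; pose proof (rpow_ge0 (1 - beta) v); lra|].
  split.
  { intros v w Hv Hvw. pose proof (rpow_lt_compat (1 - beta) v w ltac:(lra) (conj Hv Hvw)).
    lra. }
  split.
  { intros v Hv. split.
    - intros H0. apply (rpow_eq0 (1 - beta)); [exact Hv|lra].
    - intros ->. rewrite rpow_0. lra. }
  intros u0 u _ Hsol k l s t Hs Hts Ht.
  apply (solution_lower_bound beta u0 u hb0 hb1 Hsol s l _ k t Hs eq_refl). lra.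
Qed.
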